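(* Let $m,n\ge0$, $0\le k\le\min(m,n)$, and let $i,j$ be integers with $0\le i\le m$, $0\le j\le n$, $k\le i+j\le m+n-k$. Then $$\binom{m-k+j}{m-k}\,c_{m,\,n-k+i,\,i}(k,\ i+j-k)=\binom{m-k+j}{m-i}\,c_{m,n,k}(i,j).$$
   Context: Binomial coefficients $\binom{a}{b}$ equal $\frac{a!}{b!(a-b)!}$ when $0\le b\le a$ and $0$ otherwise. Let $e,f,h$ be the standard basis of $\mathfrak{sl}(2,\mathbb{C})$. $V(n)$ is the irreducible representation of highest weight $n$ with fixed highest weight vector $\phi_n$; $\{f^i\phi_n\}_{0\le i\le n}$ is a basis, $f^{n+1}\phi_n=0$. $\mathfrak{sl}(2)$ acts on $V(m)\otimes V(n)$ by $X(v\otimes w)=Xv\otimes w+v\otimes Xw$. For any $m,n\ge 0$ and $0\le k\le\min(m,n)$, $\phi_{m,n,k}=\sum_{l=0}^{k}(-1)^l\binom{m-l}{k-l}\binom{n-k+l}{l} f^l\phi_m\otimes f^{k-l}\phi_n\in V(m)\otimes V(n)$ (a highest weight vector of weight $m+n-2k$). The coordinates $c_{m,n,k}(i,j)$ are defined by $f^{p-k}\phi_{m,n,k}=\sum_{i+j=p,\,0\le i\le m,\,0\le j\le n} c_{m,n,k}(i,j)\, f^i\phi_m\otimes f^j\phi_n$ for $k\le p\le m+n-k$. *)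

From HB Require Import structures.
From mathcomp Require Import all_boot all_order all_algebra.
Set Implicit Arguments. Unset Strict Implicit. Unset Printing Implicit Defensive.
Import Order.TTheory GRing.Theory Num.Theory.
Local Open Scope ring_scope.

(* Model of V(m) (x) V(n): a vector is given by its coordinates v i j on the
   basis f^i phi_m (x) f^j phi_n (0 <= i <= m, 0 <= j <= n); coordinates
   outside this range are irrelevant (kept 0). All coordinates involved are
   integers, so we work over int (a subring of C). *)
Definition tvec := nat -> nat -> int.

(* action of f on V(m) (x) V(n):
   f (f^a phi_m (x) f^b phi_n) = f^(a+1) phi_m (x) f^b phi_n + f^a phi_m (x) f^(b+1) phi_n,
   with f^(m+1) phi_m = 0 and f^(n+1) phi_n = 0. *)
Definition fact (m n : nat) (v : tvec) : tvec := fun i j =>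
  if (i <= m)%N && (j <= n)%N then
    (if i is i'.+1 then v i' j else 0) + (if j is j'.+1 then v i j' else 0)
  else 0.

Definition phi_mnk (m n k : nat) : tvec := fun i j =>
  if [&& (i + j == k)%N, (i <= m)%N & (j <= n)%N] then
    (-1) ^+ i * ('C(m - i, k - i))%:Z * ('C(n - k + i, i))%:Z
  else 0.

Definition coord_c (m n k i j : nat) : int :=
  iter (i + j - k) (fact m n) (phi_mnk m n k) i j.

(* By the Leibniz rule, the coordinates of f^t phi_{m,n,k} are binomial
   convolutions sum_l w_l C(t, i - l) of the coefficients w_l of phi_{m,n,k}.
   Written this way both sides of the identity are sums over the same l, and they
   agree term by term: after cancelling the common factor (-1)^l C(n-k+l, l), each
   side is the multinomial coefficient
   (m-k+j)! (m-l)! / ((m-k)! (m-i)! (i-l)! (k-l)! (j-k+l)!), or both vanish. *)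

From HB Require Import structures.
From mathcomp Require Import all_boot all_order all_algebra.
From mathcomp Require Import ring zify.
Import Order.TTheory GRing.Theory Num.Theory.

Lemma bin_fact_add a b : ('C(a + b, a) * (a`! * b`!) = (a + b)`!)%N.
Proof. by have := bin_fact (leq_addr b a); rewrite addKn. Qed.

Lemma bin_trinomial_fact a b c :
  ('C(a + b + c, a) * 'C(b + c, b) * (a`! * b`! * c`!) = (a + b + c)`!)%N.
Proof. by rewrite -addnA -bin_fact_add -(bin_fact_add b c); ring. Qed.

Lemma bin_trinomial_swap a b x y z : (a + y = b + x)%N ->
  ('C(a + y + z, a) * 'C(b + x, x) * 'C(y + z, y)
   = 'C(b + x + z, b) * 'C(a + y, y) * 'C(x + z, x))%N.
Proof.
move=> eq_ayx.
have facts_gt0 : (0 < a`! * b`! * x`! * y`! * z`!)%N by rewrite !muln_gt0 !fact_gt0.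
apply/eqP; rewrite -(eqn_pmul2r facts_gt0); apply/eqP.
have lhsE : ('C(a + y + z, a) * 'C(b + x, x) * 'C(y + z, y) * (a`! * b`! * x`! * y`! * z`!)
    = (a + (y + z))`! * (b + x)`!)%N.
  by rewrite addnA -bin_trinomial_fact [in (b + x)`!]addnC -bin_fact_add (addnC x b); ring.
have rhsE : ('C(b + x + z, b) * 'C(a + y, y) * 'C(x + z, x) * (a`! * b`! * x`! * y`! * z`!)
    = (b + (x + z))`! * (a + y)`!)%N.
  by rewrite addnA -bin_trinomial_fact [in (a + y)`!]addnC -bin_fact_add (addnC y a); ring.
by rewrite lhsE rhsE !addnA eq_ayx mulnC.
Qed.

Local Open Scope ring_scope.

Definition phi_coef (m n k l : nat) : int :=
  if (l <= k)%N then (-1) ^+ l * ('C(m - l, k - l))%:Z * ('C(n - k + l, l))%:Z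
  else 0.

Lemma phi_coef_small m n k l : (k < l)%N -> phi_coef m n k l = 0.
Proof. by rewrite /phi_coef ltnNge => /negbTE ->. Qed.

(* By the Leibniz rule f^t (u (x) v) = sum_s C(t, s) f^s u (x) f^(t-s) v, this is the
   coordinate of f^t phi_{m,n,k} on f^i phi_m (x) f^(k+t-i) phi_n, ignoring the
   truncations f^(m+1) phi_m = f^(n+1) phi_n = 0. *)
Definition fphi_coef (m n k t i : nat) : int :=
  \sum_(l < i.+1) phi_coef m n k l * ('C(t, i - l))%:Z.

Lemma fphi_coef0 m n k i : fphi_coef m n k 0 i = phi_coef m n k i.
Proof.
rewrite /fphi_coef big_ord_recr /= subnn bin0 mulr1 big1 ?add0r // => l _.
by rewrite bin0n subn_eq0 leqNgt ltn_ord mulr0.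
Qed.

Lemma fphi_coef_at0 m n k t : fphi_coef m n k t 0 = phi_coef m n k 0.
Proof. by rewrite /fphi_coef big_ord1 /= bin0 mulr1. Qed.

Lemma fphi_coef_small m n k t i : (k + t < i)%N -> fphi_coef m n k t i = 0.
Proof.
move=> lt_kt_i; rewrite /fphi_coef big1 // => l _.
have [le_lk|lt_kl] := leqP l k; last by rewrite phi_coef_small ?mul0r.
by rewrite (@bin_small t) ?mulr0 //; lia.
Qed.

Lemma fphi_coefS m n k t i :
  fphi_coef m n k t.+1 i.+1 = fphi_coef m n k t i + fphi_coef m n k t i.+1.
Proof.
rewrite /fphi_coef big_ord_recr /= [X in _ = _ + X]big_ord_recr /= subnn !bin0 addrA.
congr (_ + _); rewrite -big_split /=; apply: eq_bigr => l _.
by rewrite subSn ?binS ?PoszD ?mulrDr 1?addrC // -ltnS.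
Qed.

Lemma fphi_coef_widen m n k t i N : (i < N)%N ->
  fphi_coef m n k t i
  = \sum_(l < N) (if (l <= i)%N then phi_coef m n k l * ('C(t, i - l))%:Z else 0).
Proof.
move=> lt_iN; rewrite /fphi_coef -big_mkcond.
by rewrite (big_ord_widen N (fun l => phi_coef m n k l * ('C(t, i - l))%:Z) lt_iN).
Qed.

Lemma iter_fact_phi m n k t i j :
  iter t (fact m n) (phi_mnk m n k) i j =
  if [&& (i <= m)%N, (j <= n)%N & (i + j == k + t)%N] then fphi_coef m n k t i else 0.
Proof.
elim: t i j => [|t IH] i j.
  rewrite /= fphi_coef0 /phi_mnk /phi_coef addn0.
  case: (i + j == k)%N / eqP => [?|]; last by rewrite !andbF.
  by case: (i <= m)%N; case: (j <= n)%N => //=; rewrite ifT //; lia.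
rewrite /= {1}/fact; case hi: (i <= m)%N; case hj: (j <= n)%N => //=.
case: i hi => [|i] hi; case: j hj => [|j] hj.
- by rewrite add0r; case: eqP => //; lia.
- rewrite add0r IH /= (ltnW hj) /= !fphi_coef_at0.
  by case: eqP => ?; case: eqP => ? //; lia.
- (* the extra Pascal term lies beyond the support of phi_coef *)
  rewrite addr0 IH (ltnW hi) /=.
  case: eqP => ?; case: eqP => ? //; try lia.
  by rewrite fphi_coefS (@fphi_coef_small m n k t i.+1) ?addr0 //; lia.
- rewrite !IH (ltnW hi) (ltnW hj) hi hj /=.
  case: eqP => ?; case: eqP => ?; case: eqP => ? //; try lia.
  by rewrite fphi_coefS.
Qed.

Lemma phi_coef_transpose m n k i j l :
  (k <= m)%N -> (i <= m)%N -> (k <= i + j)%N -> (l <= k)%N -> (l <= i)%N ->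
  ('C(m - k + j, m - k))%:Z * (phi_coef m (n - k + i) i l * ('C(j, k - l))%:Z)
  = ('C(m - k + j, m - i))%:Z * (phi_coef m n k l * ('C(i + j - k, i - l))%:Z).
Proof.
move=> le_km le_im le_k_ij le_lk le_li.
have binE : ('C(m - k + j, m - k) * 'C(m - l, i - l) * 'C(j, k - l)
    = 'C(m - k + j, m - i) * 'C(m - l, k - l) * 'C(i + j - k, i - l))%N.
  have [lt_j|le_j] := ltnP j (k - l).
    by rewrite (@bin_small j) // (@bin_small (i + j - k)) ?muln0 //; lia.
  have := @bin_trinomial_swap (m - k) (m - i) (i - l) (k - l) (j - (k - l)).
  have -> : (m - k + (k - l) = m - l)%N by lia.
  have -> : (m - i + (i - l) = m - l)%N by lia.
  have -> : (m - l + (j - (k - l)) = m - k + j)%N by lia.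
  have -> : (k - l + (j - (k - l)) = j)%N by lia.
  have -> : (i - l + (j - (k - l)) = i + j - k)%N by lia.
  by apply.
rewrite /phi_coef le_li le_lk addnK.
have := congr1 Posz binE; rewrite !PoszM => binEz.
transitivity ((-1) ^+ l * ('C(n - k + l, l))%:Z *
  (('C(m - k + j, m - k))%:Z * ('C(m - l, i - l))%:Z * ('C(j, k - l))%:Z)); first by ring.
by rewrite binEz; ring.
Qed.

Theorem proposition8p2 (m n k i j : nat) :
  (k <= minn m n)%N -> (i <= m)%N -> (j <= n)%N ->
  (k <= i + j)%N -> (i + j <= m + n - k)%N ->
  ('C(m - k + j, m - k))%:Z * coord_c m (n - k + i) i k (i + j - k)
  = ('C(m - k + j, m - i))%:Z * coord_c m n k i j.
Proof.
rewrite leq_min => /andP [le_km le_kn] le_im le_jn le_k_ij le_ij.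
rewrite /coord_c !iter_fact_phi !ifT; [|lia..].
have -> : (k + (i + j - k) - i = j)%N by lia.
rewrite !(@fphi_coef_widen _ _ _ _ _ (i + k).+1) ?ltnS ?leq_addl ?leq_addr //.
rewrite !mulr_sumr; apply: eq_bigr => l _.
case: (leqP l k) => [le_lk|lt_kl]; case: (leqP l i) => [le_li|lt_il].
- exact: phi_coef_transpose.
- by rewrite phi_coef_small // mul0r !mulr0.
- by rewrite phi_coef_small // mul0r !mulr0.
- by rewrite !mulr0.
Qed.
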